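(* We have $[A,x]=[A,A]=x^NA$, where $[A,x]=\{ax-xa:a\in A\}$ and $[A,A]$ is the span of all commutators.
   Context: Let $\Bbbk$ be a field of characteristic zero and $N\geq1$ an integer. Let $A=A_N$ be the $\Bbbk$-algebra generated by $x,y$ subject to the relation $yx-xy=x^N$. *)

From HB Require Import structures.
From mathcomp Require Import all_boot all_order all_algebra.
Set Implicit Arguments. Unset Strict Implicit. Unset Printing Implicit Defensive.
Import GRing.Theory.
Local Open Scope ring_scope.

(* The algebra A_N = k<x,y>/(yx - xy - x^N) is given by its presentation:
   a k-algebra A with two elements x, y such that
   (1) the defining relation holds,
   (2) A is generated (as a k-algebra) by x and y, i.e. every element is a
       k-linear combination of words in x and y,
   (3) universal property: for every k-algebra B and elements bx, by of B
       satisfying the same relation there is a k-algebra morphism A -> B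
       sending x to bx and y to by.
   These determine (A, x, y) up to unique isomorphism. *)

Definition gen_word (F : fieldType) (A : algType F) (x y : A) (w : seq bool) : A :=
  \prod_(b <- w) (if b then y else x).

Definition is_presented_AN (F : fieldType) (N : nat) (A : algType F) (x y : A) : Prop :=
  [/\ y * x - x * y = x ^+ N,
      (forall a : A, exists s : seq (F * seq bool),
          a = \sum_(p <- s) p.1 *: gen_word x y p.2)
    & (forall (B : algType F) (bx by' : B), by' * bx - bx * by' = bx ^+ N ->
          exists f : {lrmorphism A -> B}, f x = bx /\ f y = by')].

Definition comm_with (F : fieldType) (A : algType F) (x : A) : A -> Prop :=
  fun v => exists a : A, v = a * x - x * a.

(* [A, A] = k-span of all commutators (finite sums suffice, commutators being
   closed under scaling) *)
Definition comm_span (F : fieldType) (A : algType F) : A -> Prop :=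
  fun v => exists s : seq (A * A), v = \sum_(p <- s) (p.1 * p.2 - p.2 * p.1).

Definition left_mul_set (F : fieldType) (A : algType F) (u : A) : A -> Prop :=
  fun v => exists a : A, v = u * a.

From HB Require Import structures.
From mathcomp Require Import all_boot all_order all_algebra zify.
Set Implicit Arguments. Unset Strict Implicit. Unset Printing Implicit Defensive.
Import GRing.Theory.
Local Open Scope ring_scope.

(* Write N = M + 1.  The relation gives x^n y = y x^n - n x^(n+M), so the right ideal
   x^N A is also a left ideal; it contains [y, x], hence every commutator, since A is
   generated by x and y.  Conversely x^N A is spanned by the monomials y^k x^n with
   n >= N, and [y^(k+1) x^(n-N), x] is (k+1) y^k x^n plus monomials of lower y-degree,
   so in characteristic zero induction on k puts all of them in [A, x]. *)

Section Subspaces.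
Variables (F : fieldType) (V : lmodType F).

Definition subspace (P : V -> Prop) :=
  [/\ P 0, forall u v, P u -> P v -> P (u + v) & forall (c : F) u, P u -> P (c *: u)].

Definition span (G : V -> Prop) (v : V) :=
  forall P, subspace P -> (forall g, G g -> P g) -> P v.

Section SubspaceTheory.
Variables (P : V -> Prop) (hP : subspace P).

Lemma subspace0 : P 0. Proof. by case: hP. Qed.

Lemma subspaceD u v : P u -> P v -> P (u + v). Proof. by case: hP => _ + _; apply. Qed.

Lemma subspaceZ c u : P u -> P (c *: u). Proof. by case: hP => _ _; apply. Qed.

Lemma subspaceN u : P u -> P (- u). Proof. by rewrite -scaleN1r; apply: subspaceZ. Qed.

Lemma subspaceB u v : P u -> P v -> P (u - v).
Proof. by move=> hu /subspaceN; apply: subspaceD. Qed.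

Lemma subspaceMn n u : P u -> P (u *+ n). Proof. by rewrite -scaler_nat; apply: subspaceZ. Qed.

Lemma subspaceMn_inv n u : [pchar F] =i pred0 -> P (u *+ n.+1) -> P u.
Proof.
move=> /pcharf0P char0 /(subspaceZ (n.+1%:R)^-1).
by rewrite -scaler_nat scalerA mulVf ?scale1r // char0.
Qed.

End SubspaceTheory.

Lemma span_subspace G : subspace (span G).
Proof.
split=> [P /subspace0 //|u v hu hv P hP hG|c u hu P hP hG].
- by apply: subspaceD (hu P hP hG) (hv P hP hG).
- exact: subspaceZ (hu P hP hG).
Qed.

Lemma span_gen (G : V -> Prop) g : G g -> span G g.
Proof. by move=> hg P _; apply. Qed.

End Subspaces.

Lemma subspace_preim (F : fieldType) (V W : lmodType F) (f : V -> W) (Q : W -> Prop) :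
  subspace Q -> f 0 = 0 -> {morph f : u v / u + v} -> scalable f ->
  subspace (fun v => Q (f v)).
Proof.
move=> hQ f0 fD fZ; split=> [|u v hu hv|c u hu]; first by rewrite f0; apply: subspace0.
- by rewrite fD; apply: subspaceD.
- by rewrite fZ; apply: subspaceZ.
Qed.

Section AlgebraSubspaces.
Variables (F : fieldType) (A : algType F).

Lemma left_mul_set_subspace (u : A) : subspace (left_mul_set u).
Proof.
split=> [|_ _ [a ->] [b ->]|c _ [a ->]]; first by exists 0; rewrite mulr0.
- by exists (a + b); rewrite mulrDr.
- by exists (c *: a); rewrite scalerAr.
Qed.

Lemma comm_with_subspace (x : A) : subspace (comm_with x).
Proof.
split=> [|_ _ [a ->] [b ->]|c _ [a ->]]; first by exists 0; rewrite mul0r mulr0 subrr.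
- by exists (a + b); rewrite mulrDl mulrDr opprD addrACA.
- by exists (c *: a); rewrite scalerBr scalerAl scalerAr.
Qed.

Lemma subspace_mulr (P : A -> Prop) (c : A) : subspace P -> subspace (fun v => P (v * c)).
Proof.
by move=> hP; apply: subspace_preim hP _ _ _ => [|u v|k u]; rewrite ?mul0r ?mulrDl ?scalerAl.
Qed.

Lemma subspace_mull (P : A -> Prop) (c : A) : subspace P -> subspace (fun v => P (c * v)).
Proof.
by move=> hP; apply: subspace_preim hP _ _ _ => [|u v|k u]; rewrite ?mulr0 ?mulrDr ?scalerAr.
Qed.

Lemma commutator_subspace (I : A -> Prop) (b : A) :
  subspace I -> subspace (fun a => I (a * b - b * a)).
Proof.
move=> hI; apply: subspace_preim hI _ _ _; first by rewrite mul0r mulr0 subrr.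
- by move=> u v; rewrite mulrDl mulrDr opprD addrACA.
- by move=> c u; rewrite scalerBr scalerAl scalerAr.
Qed.

Lemma comm_span_sub (I : A -> Prop) :
  subspace I -> (forall a b, I (a * b - b * a)) -> forall v, comm_span v -> I v.
Proof.
move=> hI Icomm _ [s ->]; elim: s => [|p s IH]; first by rewrite big_nil; apply: subspace0.
by rewrite big_cons; apply: subspaceD.
Qed.

Lemma comm_with_comm_span (x v : A) : comm_with x v -> comm_span v.
Proof. by move=> [a ->]; exists [:: (a, x)]; rewrite big_seq1. Qed.

End AlgebraSubspaces.

Lemma commutatorMl (R : pzRingType) (c a b : R) :
  c * a * b - b * (c * a) = c * (a * b - b * a) + (c * b - b * c) * a.
Proof. by rewrite mulrBr mulrBl !mulrA addrA subrK. Qed.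

Lemma commutatorMr_expx (R : pzRingType) (b x : R) m :
  b * x ^+ m * x - x * (b * x ^+ m) = (b * x - x * b) * x ^+ m.
Proof. by rewrite mulrBl -!mulrA -exprSr exprS mulrA. Qed.

Section Generation.
Variables (F : fieldType) (A : algType F) (x y : A).
Hypothesis gen : forall a : A, exists s : seq (F * seq bool),
  a = \sum_(p <- s) p.1 *: gen_word x y p.2.

Lemma generated_ind (P : A -> Prop) : subspace P -> P 1 ->
  (forall a, P a -> P (x * a)) -> (forall a, P a -> P (y * a)) -> forall a, P a.
Proof.
move=> hP P1 Px Py a; have [s ->] := gen a.
elim: s => [|[c w] s IH]; first by rewrite big_nil; apply: subspace0.
rewrite big_cons; apply: subspaceD IH => //; apply: subspaceZ => //=.
by elim: w => [|[] w IHw]; rewrite /gen_word ?big_nil ?big_cons //; auto.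
Qed.

Lemma subspace_mull_stable (Q : A -> Prop) : subspace Q ->
  (forall v, Q v -> Q (x * v)) -> (forall v, Q v -> Q (y * v)) ->
  forall c v, Q v -> Q (c * v).
Proof.
move=> hQ Qx Qy; apply: generated_ind => [|v|c hc v hv|c hc v hv].
- split=> [v _|c1 c2 h1 h2 v hv|k c h v hv].
  + by rewrite mul0r; apply: subspace0.
  + by rewrite mulrDl; apply: subspaceD; auto.
  + by rewrite -scalerAl; apply: subspaceZ; auto.
- by rewrite mul1r.
- by rewrite -mulrA; auto.
- by rewrite -mulrA; auto.
Qed.

Lemma subspace_mulr_stable (Q : A -> Prop) : subspace Q ->
  (forall v, Q v -> Q (v * x)) -> (forall v, Q v -> Q (v * y)) ->
  forall c v, Q v -> Q (v * c).
Proof.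
move=> hQ Qx Qy; apply: generated_ind => [|v|c hc v hv|c hc v hv].
- split=> [v _|c1 c2 h1 h2 v hv|k c h v hv].
  + by rewrite mulr0; apply: subspace0.
  + by rewrite mulrDr; apply: subspaceD; auto.
  + by rewrite -scalerAr; apply: subspaceZ; auto.
- by rewrite mulr1.
- by rewrite mulrA; auto.
- by rewrite mulrA; auto.
Qed.

(* [A/I] is generated by the images of [x] and [y], which commute. *)
Lemma comm_in_ideal (I : A -> Prop) : subspace I ->
  (forall c v, I v -> I (c * v)) -> (forall c v, I v -> I (v * c)) ->
  I (y * x - x * y) -> forall a b, I (a * b - b * a).
Proof.
move=> hI Il Ir Iyx.
have comm_gens b : I (x * b - b * x) -> I (y * b - b * y) -> forall a, I (a * b - b * a).
  move=> Ix Iy; apply: generated_ind; first exact: commutator_subspace.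
  - by rewrite mul1r mulr1 subrr; apply: subspace0.
  - by move=> a ha; rewrite commutatorMl; apply: subspaceD; auto.
  - by move=> a ha; rewrite commutatorMl; apply: subspaceD; auto.
have Ixx : I (x * x - x * x) by rewrite subrr; apply: subspace0.
have Iyy : I (y * y - y * y) by rewrite subrr; apply: subspace0.
have Ixy : I (x * y - y * x) by rewrite -opprB; apply: (subspaceN hI).
have comm_x := comm_gens x Ixx Iyx; have comm_y := comm_gens y Ixy Iyy.
by move=> a b; apply: comm_gens; rewrite -opprB; apply: (subspaceN hI).
Qed.

End Generation.

Section Relation.
Variables (F : fieldType) (M : nat) (A : algType F) (x y : A).
Hypothesis rel : y * x - x * y = x ^+ M.+1.

Lemma expx_mulr_y n : x ^+ n * y = y * x ^+ n - x ^+ (n + M) *+ n.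
Proof.
elim: n => [|n IH]; first by rewrite !expr0 mulr1 mul1r mulr0n subr0.
have xy : x * y = y * x - x ^+ M.+1 by rewrite -rel opprB addrC subrK.
rewrite exprS -mulrA IH mulrBr (mulrA x y) xy mulrBl -mulrA -exprS -exprD mulrnAr.
by rewrite -exprS mulrSr addSn opprD addrA addrAC addSn (addnC M n).
Qed.

Lemma y_mulr_expx : y * x ^+ M.+1 = x ^+ M.+1 * (y + x ^+ M *+ M.+1).
Proof. by rewrite mulrDr expx_mulr_y mulrnAr -exprD subrK. Qed.

Definition monomials (P : nat -> nat -> Prop) :=
  span (fun g => exists k n, P k n /\ g = y ^+ k * x ^+ n).

Lemma monomials_gen (P : nat -> nat -> Prop) k n : P k n -> monomials P (y ^+ k * x ^+ n).
Proof. by move=> hkn; apply: span_gen; exists k, n. Qed.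

Lemma monomials_mulr_expx (P Q : nat -> nat -> Prop) m v :
  (forall k n, P k n -> Q k (n + m)%N) -> monomials P v -> monomials Q (v * x ^+ m).
Proof.
move=> PQ hv; apply: (hv (fun u => monomials Q (u * x ^+ m))).
  exact/subspace_mulr/span_subspace.
by move=> _ [k [n [hkn ->]]]; rewrite -mulrA -exprD; apply: monomials_gen; exact: PQ.
Qed.

Lemma monomials_mull_y (P Q : nat -> nat -> Prop) v :
  (forall k n, P k n -> Q k.+1 n) -> monomials P v -> monomials Q (y * v).
Proof.
move=> PQ hv; apply: (hv (fun u => monomials Q (y * u))).
  exact/subspace_mull/span_subspace.
by move=> _ [k [n [hkn ->]]]; rewrite mulrA -exprS; apply: monomials_gen; exact: PQ.
Qed.

Lemma monomials_mulr_y (P Q : nat -> nat -> Prop) v :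
  (forall k n, P k n -> Q k.+1 n /\ Q k (n + M)%N) -> monomials P v -> monomials Q (v * y).
Proof.
move=> PQ hv; apply: (hv (fun u => monomials Q (u * y))).
  exact/subspace_mulr/span_subspace.
move=> _ [k [n [/PQ [Q1 Q2] ->]]].
rewrite -mulrA expx_mulr_y mulrBr mulrA -exprSr mulrnAr.
apply: (subspaceB (span_subspace _)); first exact: monomials_gen.
by apply: (subspaceMn (span_subspace _)); apply: monomials_gen.
Qed.

Definition xN_monomials := monomials (fun _ n => (M < n)%N).

Definition xN_monomials_below j := monomials (fun k n => (k < j)%N /\ (M < n)%N).

Lemma commutator_expx_expy j n :
  (M < n)%N -> xN_monomials_below j (x ^+ n * y ^+ j - y ^+ j * x ^+ n).
Proof.
move=> hn; elim: j => [|j IH].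
  by rewrite !expr0 mulr1 mul1r subrr; exact: (subspace0 (span_subspace _)).
have -> : x ^+ n * y ^+ j.+1 - y ^+ j.+1 * x ^+ n =
    (x ^+ n * y ^+ j - y ^+ j * x ^+ n) * y - (y ^+ j * x ^+ (n + M)) *+ n.
  rewrite exprSr mulrA mulrBl -(mulrA _ (x ^+ n) y) expx_mulr_y mulrBr mulrnAr.
  by rewrite opprB addrA addrAC addrK mulrA -exprSr.
apply: (subspaceB (span_subspace _)).
  by apply: monomials_mulr_y IH => k m [hk hm]; split; split; lia.
by apply: (subspaceMn (span_subspace _)); apply: monomials_gen; lia.
Qed.

Lemma commutator_expy_x j : xN_monomials_below j
  ((y ^+ j.+1 * x - x * y ^+ j.+1) - (y ^+ j * x ^+ M.+1) *+ j.+1).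
Proof.
elim: j => [|j IH].
  by rewrite expr1 expr0 mul1r mulr1n rel subrr; exact: (subspace0 (span_subspace _)).
have -> : (y ^+ j.+2 * x - x * y ^+ j.+2) - (y ^+ j.+1 * x ^+ M.+1) *+ j.+2 =
    y * ((y ^+ j.+1 * x - x * y ^+ j.+1) - (y ^+ j * x ^+ M.+1) *+ j.+1) +
    (x ^+ M.+1 * y ^+ j.+1 - y ^+ j.+1 * x ^+ M.+1).
  rewrite [in LHS](exprS y j.+1) commutatorMl rel [in RHS]mulrBr mulrnAr mulrA -exprS.
  by rewrite [in LHS]mulrSr opprD addrACA.
apply: (subspaceD (span_subspace _)); last exact: commutator_expx_expy.
by apply: monomials_mull_y IH => k n [hk hn].
Qed.

Lemma monomial_comm_with k n :
  [pchar F] =i pred0 -> (M < n)%N -> comm_with x (y ^+ k * x ^+ n).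
Proof.
move=> char0; elim/ltn_ind: k n => j IH n hn.
have below_comm v : xN_monomials_below j v -> comm_with x v.
  by move=> hv; apply: hv (comm_with_subspace x) _ => _ [k [m [[hk hm] ->]]]; apply: IH.
apply: (subspaceMn_inv (comm_with_subspace x) (n := j) char0).
(* [[y^(j+1) x^(n-N), x] = (j+1) y^j x^n + D x^(n-N)], with [D] of lower [y]-degree. *)
pose D := (y ^+ j.+1 * x - x * y ^+ j.+1) - (y ^+ j * x ^+ M.+1) *+ j.+1.
have -> : (y ^+ j * x ^+ n) *+ j.+1 =
    (y ^+ j.+1 * x ^+ (n - M.+1)) * x - x * (y ^+ j.+1 * x ^+ (n - M.+1)) -
    D * x ^+ (n - M.+1).
  rewrite /D commutatorMr_expx -mulrBl opprB addrC subrK.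
  by rewrite mulrnAl -mulrA -exprD subnKC.
apply: (subspaceB (comm_with_subspace x)); first by eexists.
apply: below_comm; apply: (monomials_mulr_expx _ (commutator_expy_x (j := j))) => k m [hk hm]; lia.
Qed.

Hypothesis gen : forall a : A, exists s : seq (F * seq bool),
  a = \sum_(p <- s) p.1 *: gen_word x y p.2.

Lemma xN_mul_comm_with a :
  [pchar F] =i pred0 -> comm_with x (x ^+ M.+1 * a).
Proof.
move=> char0.
have xN_mulr : forall c v, xN_monomials v -> xN_monomials (v * c).
  apply: (subspace_mulr_stable gen (Q := xN_monomials) (span_subspace _)) => v hv.
    by apply: (monomials_mulr_expx (m := 1)) hv => k n; apply: ltn_addr.
  by apply: monomials_mulr_y hv => k n hn; split=> //; apply: ltn_addr.
have : xN_monomials (x ^+ M.+1 * a).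
  by rewrite -[x ^+ M.+1]mul1r -(expr0 y); apply: xN_mulr; exact: monomials_gen.
by apply=> [|_ [k [n [hn ->]]]]; [exact: comm_with_subspace|exact: monomial_comm_with].
Qed.

Lemma xN_left_ideal c v : left_mul_set (x ^+ M.+1) v -> left_mul_set (x ^+ M.+1) (c * v).
Proof.
move: c v; apply: (subspace_mull_stable gen (left_mul_set_subspace _)) => _ [a ->].
  by exists (x * a); rewrite !mulrA -exprS exprSr.
by exists ((y + x ^+ M *+ M.+1) * a); rewrite !mulrA y_mulr_expx.
Qed.

End Relation.

Theorem lemma3p2 (F : fieldType) (N : nat) (A : algType F) (x y : A) :
  [pchar F] =i pred0 -> (1 <= N)%N -> is_presented_AN N x y ->
  (forall v : A, comm_with x v <-> comm_span v) /\
  (forall v : A, comm_span v <-> left_mul_set (x ^+ N) v).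
Proof.
move=> char0; case: N => [//|M] _ [rel gen _].
pose I := left_mul_set (x ^+ M.+1).
have I_subspace : subspace I := left_mul_set_subspace _.
have I_rel : I (y * x - x * y) by rewrite rel; exists 1; rewrite mulr1.
have I_right c v : I v -> I (v * c) by move=> [a ->]; exists (a * c); rewrite mulrA.
have I_comm := comm_in_ideal gen I_subspace (xN_left_ideal rel gen) I_right I_rel.
have span_I := comm_span_sub I_subspace I_comm.
have I_comm_with v : I v -> comm_with x v.
  by move=> [a ->]; exact: xN_mul_comm_with rel gen a char0.
split=> v; split; [exact: comm_with_comm_span|move=> /span_I; exact: I_comm_with|exact: span_I|].
by move=> /I_comm_with; exact: comm_with_comm_span.
Qed.
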